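(* For any $i\in[n]$, the number of classical parking functions $p\in\mathrm{PF}_n$ whose classical outcome is $\mathrm{Inc}_i^n:=i(i+1)\cdots n\,12\cdots(i-1)$ equals $(n+1-i)!\,(i-1)!$.
   Context: $[n]=\{1,\dots,n\}$; permutations of $[n]$ are written in one-line notation. A parking preference is $p=(p_1,\dots,p_n)\in[n]^n$. Classical parking process: cars $1,\dots,n$ enter in order into spots $1,\dots,n$, initially unoccupied; car $i$ parks in the first unoccupied spot $k\ge p_i$ and fails if there is none. $\mathrm{PF}_n$ is the set of $p$ for which all cars park; the classical outcome of $p$ is the permutation $\pi$ with $\pi_k$ the car in spot $k$ at the end. *)

From mathcomp Require Import all_boot.
Set Implicit Arguments. Unset Strict Implicit. Unset Printing Implicit Defensive.

(* Convention: spots and preferences are 1-based as in the paper.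
   A parking preference p in [n]^n is a finite function 'I_n -> 'I_n,
   where car c+1 has preference (p c)+1 (0-based ordinal shift). *)

(* State of the lot: a sequence of length n, entry k (0-based, i.e. spot k+1)
   is Some car (1-based car label) or None (unoccupied). *)

Definition first_free (st : seq (option nat)) (q : nat) : option nat :=
  let k := find (fun j => (q <= j) && (nth (Some 0) st j == None)) (iota 0 (size st)) in
  if k < size st then Some k else None.

(* Car `car` (1-based label) with 0-based preference q enters. *)
Definition park_step (st : option (seq (option nat))) (cq : nat * nat)
  : option (seq (option nat)) :=
  match st with
  | None => None
  | Some s => match first_free s cq.2 with
              | None => None
              | Some k => Some (set_nth None s k (Some cq.1))
              end
  end.

Definition park_run (n : nat) (p : {ffun 'I_n -> 'I_n}) : option (seq (option nat)) :=
  foldl park_step (Some (nseq n None))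
        [seq ((val c).+1, val (p c)) | c <- enum 'I_n].

Definition is_PF (n : nat) (p : {ffun 'I_n -> 'I_n}) : bool := park_run p != None.

Definition outcome (n : nat) (p : {ffun 'I_n -> 'I_n}) : seq nat :=
  match park_run p with
  | Some s => map (odflt 0) s
  | None => [::]
  end.

Definition Inc (n i : nat) : seq nat := iota i (n.+1 - i) ++ iota 1 (i.-1).

From mathcomp Require Import all_boot zify.
Set Implicit Arguments. Unset Strict Implicit. Unset Printing Implicit Defensive.

(* Fix a target outcome pi. If the outcome is pi, then after cars 1..k have
   parked, exactly the spots of pi holding labels <= k are occupied. Given this
   lot, car k+1 parks in its spot t of pi iff its preference q is <= t and all
   spots q..t-1 are occupied, so pi is reached iff every car independently makes
   such an admissible choice: the count is a product over cars. For
   pi = Inc_i^n, with a = n+1-i and b = i-1, car k+1 <= b must park in spot a+k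
   (0-based) right after the k cars already in spots a..a+k-1 while the first a
   spots are still empty, giving k+1 choices; car k+1 > b parks in spot k-b with
   every spot before it occupied, giving k-b+1 choices. Hence b! a!. *)

Lemma first_freeP s q j :
  first_free s q = Some j <->
  [/\ j < size s, q <= j, nth (Some 0) s j == None &
      forall j', q <= j' < j -> nth (Some 0) s j' != None].
Proof.
rewrite /first_free; set P := fun j => _ && _.
case: findP => [noP | k]; rewrite size_iota.
  rewrite ltnn; split=> // -[js qj fj _]; case/hasP: noP.
  by exists j; rewrite ?mem_iota ?add0n // /P qj fj.
move=> ks Pk before; rewrite ks.
have /andP[qk fk] := Pk 0; rewrite nth_iota // add0n in qk fk.
split=> [[<-] | [js qj fj Hj]].
  split=> // j' /andP[qj' j'k]; have := before 0 j' j'k.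
  by rewrite nth_iota ?(ltn_trans j'k) // add0n /P qj' => /negbT.
congr Some; apply/eqP; rewrite eqn_leq; apply/andP; split.
  rewrite leqNgt; apply/negP => jk; have := before 0 j jk.
  by rewrite nth_iota // add0n /P qj fj.
rewrite leqNgt; apply/negP => kj.
by have := Hj k; rewrite qk kj fk => /(_ isT).
Qed.

Lemma park_step_stable s cq s' : park_step (Some s) cq = Some s' ->
  forall j, nth None s j != None -> nth None s' j = nth None s j.
Proof.
rewrite /=; case E: first_free => [k|//] [<-] j sj.
have [ks _ /eqP fk _] := (first_freeP s cq.2 k).1 E.
rewrite nth_set_nth /=; case: eqP => // ejk; subst j.
by rewrite (set_nth_default (Some 0)) // fk in sj.
Qed.

Definition park_prefix n (pf : nat -> nat) k :=
  foldl park_step (Some (nseq n None)) [seq (c.+1, pf c) | c <- iota 0 k].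

Lemma park_prefixS n pf k :
  park_prefix n pf k.+1 = park_step (park_prefix n pf k) (k.+1, pf k).
Proof. by rewrite /park_prefix -{1}addn1 iotaD map_cat foldl_cat. Qed.

Lemma park_prefix_stable n pf k m s' : k <= m -> park_prefix n pf m = Some s' ->
  exists2 s, park_prefix n pf k = Some s &
    forall j, nth None s j != None -> nth None s' j = nth None s j.
Proof.
elim: m s' => [|m IHm] s'; first by rewrite leqn0 => /eqP -> ->; exists s'.
rewrite leq_eqVlt ltnS => /orP[/eqP -> -> | km]; first by exists s'.
rewrite park_prefixS; case E: (park_prefix n pf m) => [s''|//] step.
have [s -> Hs] := IHm s'' km E; exists s => // j sj.
by rewrite (park_step_stable step) ?Hs // Hs.
Qed.

Lemma park_run_prefix n (p : {ffun 'I_n -> 'I_n}) :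
  park_run p = park_prefix n (fun c => oapp (fun c => val (p c)) 0 (insub c)) n.
Proof.
rewrite /park_run /park_prefix -val_enum_ord -map_comp.
by congr foldl; apply: eq_map => c /=; rewrite valK.
Qed.

Section ParkingOutcome.

Variables (n : nat) (pi : seq nat).
Hypothesis pi_perm : perm_eq pi (iota 1 n).

Definition parked_lot k := [seq if x <= k then Some x else None | x <- pi].

Definition target_spot k := index k.+1 pi.

(* Spots, cars [k] and preferences [q] are 0-based: [k] stands for car k+1. *)
Definition admissible k q :=
  (q <= target_spot k) && all (fun j => nth 0 pi j <= k) (iota q (target_spot k - q)).

Lemma size_pi : size pi = n.
Proof. by rewrite (perm_size pi_perm) size_iota. Qed.

Lemma mem_pi x : (x \in pi) = (0 < x <= n).
Proof. by rewrite (perm_mem pi_perm) mem_iota add1n. Qed.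

Lemma target_spot_lt k : k < n -> target_spot k < n.
Proof. by move=> kn; rewrite -size_pi index_mem mem_pi. Qed.

Lemma nth_target_spot k : k < n -> nth 0 pi (target_spot k) = k.+1.
Proof. by move=> kn; rewrite nth_index // mem_pi. Qed.

Lemma target_spotP k j : j < n -> nth 0 pi j = k.+1 -> j = target_spot k.
Proof.
move=> jn pij; rewrite /target_spot -pij index_uniq ?size_pi //.
by rewrite (perm_uniq pi_perm) iota_uniq.
Qed.

Lemma nth_parked_lot x0 k j : j < n ->
  nth x0 (parked_lot k) j = if nth 0 pi j <= k then Some (nth 0 pi j) else None.
Proof. by move=> jn; rewrite (nth_map 0) ?size_pi. Qed.

Lemma size_parked_lot k : size (parked_lot k) = n.
Proof. by rewrite size_map size_pi. Qed.

Lemma parked_lot0 : parked_lot 0 = nseq n None.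
Proof.
apply: (@eq_from_nth _ None); rewrite size_parked_lot ?size_nseq // => j jn.
have /andP[pj _] : 0 < nth 0 pi j <= n by rewrite -mem_pi mem_nth ?size_pi.
by rewrite nth_parked_lot // nth_nseq jn leqNgt pj.
Qed.

Lemma outcome_parked_lot : map (odflt 0) (parked_lot n) = pi.
Proof.
rewrite -map_comp -{2}[pi]map_id; apply/eq_in_map => x /=.
by rewrite mem_pi => /andP[_ ->].
Qed.

Lemma park_step_admissible k q : k < n -> admissible k q ->
  park_step (Some (parked_lot k)) (k.+1, q) = Some (parked_lot k.+1).
Proof.
move=> kn /andP[qt /allP occ] /=; have tn := target_spot_lt kn.
have -> : first_free (parked_lot k) q = Some (target_spot k).
  apply/first_freeP; split=> //; first by rewrite size_parked_lot.
    by rewrite nth_parked_lot // nth_target_spot // ltnn.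
  move=> j /andP[qj jt]; rewrite nth_parked_lot ?(ltn_trans jt) //.
  by rewrite occ // mem_iota subnKC // qj.
congr Some; apply: (@eq_from_nth _ None).
  by rewrite size_set_nth !size_parked_lot (maxn_idPr tn).
move=> j; rewrite size_set_nth size_parked_lot (maxn_idPr tn) => jn.
rewrite nth_set_nth /= !nth_parked_lot //; case: eqP => [-> | /eqP ne].
  by rewrite nth_target_spot // leqnn.
rewrite [_ <= k.+1]leq_eqVlt ltnS; case: eqP => // /(target_spotP jn) ej.
by rewrite ej eqxx in ne.
Qed.

Lemma park_prefix_parked pf : (forall c, c < n -> admissible c (pf c)) ->
  forall k, k <= n -> park_prefix n pf k = Some (parked_lot k).
Proof.
move=> adm; elim=> [|k IHk] kn; first by rewrite /park_prefix /= parked_lot0.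
by rewrite park_prefixS IHk ?park_step_admissible ?adm // ltnW.
Qed.

Lemma admissible_of_park_prefix pf s :
  park_prefix n pf n = Some s -> map (odflt 0) s = pi ->
  forall c, c < n -> admissible c (pf c).
Proof.
move=> run out.
suff /(_ n (leqnn n)) [] : forall k, k <= n ->
  park_prefix n pf k = Some (parked_lot k) /\ forall c, c < k -> admissible c (pf c) by [].
elim=> [|k IHk] kn; first by rewrite /park_prefix /= parked_lot0.
have [prefk admk] := IHk (ltnW kn).
have [s1 run1 stable] := park_prefix_stable kn run.
move: run1; rewrite park_prefixS prefk /=; case E: first_free => [j|//] [s1E].
have [jn qj _ before] := (first_freeP _ _ _).1 E; rewrite size_parked_lot in jn.
have pij : nth 0 pi j = k.+1.
  have := stable j; rewrite -s1E nth_set_nth /= eqxx => /(_ isT) sj.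
  by rewrite -out (nth_map None) ?sj // -(size_map (odflt 0)) out size_pi.
have adm : admissible k (pf k).
  rewrite /admissible -(target_spotP jn pij) qj; apply/allP => j'.
  rewrite mem_iota subnKC // => /andP[qj' j'j]; move: (before j').
  by rewrite qj' j'j nth_parked_lot ?(ltn_trans j'j) //; case: leqP => // _ /(_ isT).
split; first by rewrite -(park_step_admissible kn adm) /= E.
by move=> c; rewrite ltnS leq_eqVlt => /orP[/eqP -> // | /admk].
Qed.

Lemma PF_outcomeE (p : {ffun 'I_n -> 'I_n}) :
  is_PF p && (outcome p == pi) = [forall c : 'I_n, admissible c (p c)].
Proof.
rewrite /is_PF /outcome park_run_prefix; set pf := fun c : nat => _.
have pfE (c : 'I_n) : pf c = p c by rewrite /pf valK.
apply/idP/forallP => [|adm].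
  case E: park_prefix => [s|//] /eqP out c; rewrite -pfE.
  exact: admissible_of_park_prefix E out c (ltn_ord c).
rewrite (park_prefix_parked _ (leqnn n)) ?outcome_parked_lot ?eqxx //.
by move=> c cn; have := adm (Ordinal cn); rewrite -pfE.
Qed.

Lemma card_PF_outcome :
  #|[set p : {ffun 'I_n -> 'I_n} | is_PF p && (outcome p == pi)]| =
  \prod_(c < n) count (admissible c) (iota 0 n).
Proof.
pose F (c : 'I_n) := [pred q : 'I_n | admissible c q].
rewrite (@eq_card _ _ (family F)) => [|p]; last first.
  by rewrite inE PF_outcomeE; apply/forallP/familyP.
rewrite card_family foldrE big_map big_enum /=; apply: eq_bigr => c _.
by rewrite -val_enum_ord count_map -size_filter enumT -cardE.
Qed.

End ParkingOutcome.

Lemma count_iota_itv m lo hi : lo <= hi < m ->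
  count (fun q => lo <= q <= hi) (iota 0 m) = hi.+1 - lo.
Proof.
move=> /andP[lohi him].
have -> : m = lo + ((hi.+1 - lo) + (m - hi.+1)) by lia.
rewrite !iotaD !count_cat add0n.
rewrite (@eq_in_count _ _ pred0 (iota 0 lo)); last by move=> x; rewrite mem_iota /=; lia.
rewrite (@eq_in_count _ _ predT (iota lo _)); last by move=> x; rewrite mem_iota /=; lia.
rewrite (@eq_in_count _ _ pred0 (iota (lo + _) _)); last by move=> x; rewrite mem_iota /=; lia.
by rewrite !count_pred0 count_predT size_iota addn0.
Qed.

Lemma prod_fact_split a b :
  \prod_(0 <= k < a + b) (if k < b then k else k - b).+1 = a`! * b`!.
Proof.
rewrite (@big_cat_nat _ _ _ b) ?leq_addl //= mulnC.
congr (_ * _); rewrite fact_prod big_add1 /=.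
  rewrite -{1}(add0n b) big_addn addnK.
  by apply: eq_big_nat => k kn; rewrite addnK ifN // -leqNgt leq_addl.
by apply: eq_big_nat => k /andP[_ kb]; rewrite kb.
Qed.

Lemma Inc_addn a b : Inc (a + b) b.+1 = iota b.+1 a ++ iota 1 b.
Proof. by rewrite /Inc subSS addnK. Qed.

Lemma perm_Inc a b : perm_eq (Inc (a + b) b.+1) (iota 1 (a + b)).
Proof. by rewrite Inc_addn addnC iotaD add1n perm_catC. Qed.

Section IncOutcome.

Variables a b : nat.
Local Notation inc := (Inc (a + b) b.+1).

Lemma nth_Inc j : j < a + b -> nth 0 inc j = if j < a then b.+1 + j else (j - a).+1.
Proof.
by move=> jn; rewrite Inc_addn nth_cat size_iota; case: ifP => ja; rewrite nth_iota; lia.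
Qed.

Lemma target_spot_Inc k : k < a + b -> target_spot inc k = if k < b then a + k else k - b.
Proof.
move=> kn; symmetry; apply: (target_spotP (perm_Inc a b));
  case: (ltnP k b) => kb; rewrite ?nth_Inc; try case: ifP; lia.
Qed.

Lemma admissible_Inc k : k < a + b ->
  admissible inc k =1 fun q => (if k < b then a else 0) <= q <= target_spot inc k.
Proof.
move=> kn q; rewrite /admissible target_spot_Inc //.
apply/andP/andP => [[qt /allP occ] | [lq qt]]; split=> //.
  move: qt occ; case: (ltnP k b) => // kb qt occ; rewrite leqNgt; apply/negP => qa.
  by have := occ q; rewrite mem_iota nth_Inc ?qa; lia.
apply/allP => j; rewrite mem_iota subnKC // => /andP[qj jt].
by move: lq qt jt; case: (ltnP k b) => kb lq qt jt; rewrite nth_Inc; try case: ifP; lia.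
Qed.

Lemma count_admissible_Inc k : k < a + b ->
  count (admissible inc k) (iota 0 (a + b)) = (if k < b then k else k - b).+1.
Proof.
move=> kn; rewrite (eq_count (admissible_Inc kn)) count_iota_itv target_spot_Inc //;
  case: ifP; lia.
Qed.

Lemma card_PF_outcome_Inc :
  #|[set p : {ffun 'I_(a + b) -> 'I_(a + b)} | is_PF p && (outcome p == inc)]| =
  a`! * b`!.
Proof.
rewrite (card_PF_outcome (perm_Inc a b)) -prod_fact_split big_mkord.
by apply: eq_bigr => k _; rewrite count_admissible_Inc.
Qed.

End IncOutcome.

Theorem proposition3p1 (n i : nat) (hi1 : 1 <= i) (hin : i <= n) :
  #|[set p : {ffun 'I_n -> 'I_n} | is_PF p && (outcome p == Inc n i)]|
  = ((n.+1 - i)`! * (i.-1)`!)%N.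
Proof.
case: i hi1 hin => [//|b] _ bn.
have [a ->] : exists a, n = a + b by exists (n - b); lia.
by rewrite subSS addnK card_PF_outcome_Inc.
Qed.
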